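(* Suppose $\mathop{\downarrow}$ satisfies invariance, monotonicity, full existence and stationarity. Then for all closed tuples $a,b$ and closed sets $C$ with $C\subseteq a\cap b$, if $a\mathop{\downarrow}_C b$ then $a\mathop{\downarrow}^d_C b$ (and hence $a\mathop{\downarrow}^a_C b$).
   Context: $\mathbb M$ monster model; closed = algebraically closed; $\equiv_C$ = conjugacy under automorphisms fixing $C$ pointwise. Invariance: $A\mathop{\downarrow}_C B$, $\sigma\in\operatorname{Aut}(\mathbb M)$ imply $\sigma(A)\mathop{\downarrow}_{\sigma(C)}\sigma(B)$. Monotonicity: $A\mathop{\downarrow}_C B$, $A_0\subseteq A$, $B_0\subseteq B$ imply $A_0\mathop{\downarrow}_C B_0$. Full existence: for closed $C$, any $B$ and tuple $a$, some $a'\equiv_C a$ has $a'\mathop{\downarrow}_C B$. Stationarity: for closed $C$ and closed tuples $a,a',b$ with $C\subseteq a\cap b$, $a\mathop{\downarrow}_C b$, $a'\mathop{\downarrow}_C b$, $a'\equiv_C a$ imply $ab\equiv_C a'b$. $a\mathop{\downarrow}^d_C b$ iff for every $C$-indiscernible $(b_i)_{i<\omega}$ with $b_0=b$ there is $a'$ with $a'b_i\equiv_C ab$ for all $i$. $A\mathop{\downarrow}^a_C B$ iff $\operatorname{acl}(AC)\cap\operatorname{acl}(BC)=\operatorname{acl}(C)$. *)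

From Stdlib Require Import Arith List Vectors.Fin.
Set Implicit Arguments.

Record Language := {
  Fsym : Type; Fari : Fsym -> nat;
  Rsym : Type; Rari : Rsym -> nat }.

Record Structure (L : Language) := {
  carrier :> Type;
  finterp : forall f : Fsym L, (Fin.t (Fari L f) -> carrier) -> carrier;
  rinterp : forall r : Rsym L, (Fin.t (Rari L r) -> carrier) -> Prop }.

Inductive term (L : Language) (A : Type) : Type :=
| tvar : nat -> term L A
| tpar : A -> term L A
| tfun : forall f : Fsym L, (Fin.t (Fari L f) -> term L A) -> term L A.

Inductive formula (L : Language) (A : Type) : Type :=
| feq : term L A -> term L A -> formula L A
| frel : forall r : Rsym L, (Fin.t (Rari L r) -> term L A) -> formula L A
| fnot : formula L A -> formula L A
| fand : formula L A -> formula L A -> formula L A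
| fex : nat -> formula L A -> formula L A.

Definition update {X : Type} (v : nat -> X) (n : nat) (x : X) : nat -> X :=
  fun k => if Nat.eqb k n then x else v k.

Fixpoint teval {L : Language} (M : Structure L) (v : nat -> M) (t : term L M) : M :=
  match t with
  | tvar _ _ n => v n
  | tpar _ c => c
  | tfun f args => finterp M f (fun i => teval M v (args i))
  end.

Fixpoint sat {L : Language} (M : Structure L) (v : nat -> M) (phi : formula L M) : Prop :=
  match phi with
  | feq t1 t2 => teval M v t1 = teval M v t2
  | frel r args => rinterp M r (fun i => teval M v (args i))
  | fnot psi => ~ sat M v psi
  | fand p q => sat M v p /\ sat M v q
  | fex n psi => exists x : M, sat M (update v n x) psi
  end.

Fixpoint tparams_in {L : Language} {X : Type} (A : X -> Prop) (t : term L X) : Prop :=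
  match t with
  | tvar _ _ _ => True
  | tpar _ c => A c
  | tfun f args => forall i, tparams_in A (args i)
  end.

Fixpoint params_in {L : Language} {X : Type} (A : X -> Prop) (phi : formula L X) : Prop :=
  match phi with
  | feq t1 t2 => tparams_in A t1 /\ tparams_in A t2
  | frel r args => forall i, tparams_in A (args i)
  | fnot psi => params_in A psi
  | fand p q => params_in A p /\ params_in A q
  | fex _ psi => params_in A psi
  end.

(* a formula phi(x) in one free variable x is evaluated by assigning x to every variable *)
Definition sat1 {L : Language} (M : Structure L) (phi : formula L M) (x : M) : Prop :=
  sat M (fun _ => x) phi.

Definition automorphism {L : Language} (M : Structure L) (s : M -> M) : Prop :=
  (forall x y, s x = s y -> x = y) /\ (forall y, exists x, s x = y) /\
  (forall f (args : Fin.t (Fari L f) -> M), s (finterp M f args) = finterp M f (fun i => s (args i))) /\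
  (forall r (args : Fin.t (Rari L r) -> M), rinterp M r args <-> rinterp M r (fun i => s (args i))).

(* sets are predicates on M; tuples are maps from an index type *)
Definition subset {X : Type} (A B : X -> Prop) : Prop := forall x, A x -> B x.
Definition union {X : Type} (A B : X -> Prop) : X -> Prop := fun x => A x \/ B x.
Definition range {I X : Type} (a : I -> X) : X -> Prop := fun x => exists i, a i = x.
Definition image {X : Type} (s : X -> X) (A : X -> Prop) : X -> Prop :=
  fun y => exists x, A x /\ s x = y.

(* smallness relative to the cardinal of K:  |I| < |K| *)
Definition smallT (K : Type) (I : Type) : Prop :=
  ~ exists f : K -> I, forall x y, f x = f y -> x = y.
Definition smallS {X : Type} (K : Type) (A : X -> Prop) : Prop := smallT K {x : X | A x}.

(* M is a monster model with respect to kappa = |K| *)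
Definition monster {L : Language} (M : Structure L) (K : Type) : Prop :=
  (* kappa > |L| + aleph_0 *)
  smallT K (Fsym L + Rsym L + nat)%type /\
  (* kappa-saturated *)
  (forall (A : M -> Prop) (p : formula L M -> Prop), smallS K A ->
     (forall phi, p phi -> params_in A phi) ->
     (forall l : list (formula L M), (forall phi, In phi l -> p phi) ->
        exists y, forall phi, In phi l -> sat1 M phi y) ->
     exists y, forall phi, p phi -> sat1 M phi y) /\
  (* strongly kappa-homogeneous *)
  (forall (I : Type) (a a' : I -> M), smallT K I ->
     (forall (phi : formula L M) (rho : nat -> I), params_in (fun _ => False) phi ->
        (sat M (fun n => a (rho n)) phi <-> sat M (fun n => a' (rho n)) phi)) ->
     exists s, automorphism M s /\ forall i, s (a i) = a' i).

Definition acl {L : Language} (M : Structure L) (A : M -> Prop) (x : M) : Prop :=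
  exists phi : formula L M, params_in A phi /\ sat1 M phi x /\
    exists l : list M, forall y, sat1 M phi y -> In y l.

Definition closed {L : Language} (M : Structure L) (A : M -> Prop) : Prop :=
  subset (acl M A) A.

Definition closed_tuple {L : Language} (M : Structure L) {I : Type} (a : I -> M) : Prop :=
  closed M (range a).

(* a ≡_C a' : conjugate by an automorphism fixing C pointwise *)
Definition conjC {L : Language} (M : Structure L) (C : M -> Prop) {I : Type} (a a' : I -> M) : Prop :=
  exists s, automorphism M s /\ (forall c, C c -> s c = c) /\ forall i, s (a i) = a' i.

Definition conjC2 {L : Language} (M : Structure L) (C : M -> Prop) {I J : Type}
  (a : I -> M) (b : J -> M) (a' : I -> M) (b' : J -> M) : Prop :=
  exists s, automorphism M s /\ (forall c, C c -> s c = c) /\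
    (forall i, s (a i) = a' i) /\ (forall j, s (b j) = b' j).

Definition indiscernible {L : Language} (M : Structure L) (C : M -> Prop) {J : Type}
  (bs : nat -> J -> M) : Prop :=
  forall (n : nat) (s t : nat -> nat),
    (forall k, s k < s (S k)) -> (forall k, t k < t (S k)) ->
    conjC M C (fun p : {k : nat | k < n} * J => bs (s (proj1_sig (fst p))) (snd p))
              (fun p : {k : nat | k < n} * J => bs (t (proj1_sig (fst p))) (snd p)).

Definition dindep {L : Language} (M : Structure L) (C : M -> Prop) {I J : Type}
  (a : I -> M) (b : J -> M) : Prop :=
  forall bs : nat -> J -> M, indiscernible M C bs -> (forall j, bs 0 j = b j) ->
    exists a' : I -> M, forall i, conjC2 M C a' (bs i) a b.

Definition aindep {L : Language} (M : Structure L) (A C B : M -> Prop) : Prop :=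
  forall x, (acl M (union A C) x /\ acl M (union B C) x) <-> acl M C x.

(* axioms on an abstract independence relation indep A C B  ("A ↓_C B") *)
Definition invariance {L : Language} (M : Structure L) (K : Type)
  (indep : (M -> Prop) -> (M -> Prop) -> (M -> Prop) -> Prop) : Prop :=
  forall A C B s, smallS K A -> smallS K C -> smallS K B -> automorphism M s ->
    indep A C B -> indep (image s A) (image s C) (image s B).

Definition monotonicity {L : Language} (M : Structure L) (K : Type)
  (indep : (M -> Prop) -> (M -> Prop) -> (M -> Prop) -> Prop) : Prop :=
  forall A C B A0 B0, smallS K A -> smallS K C -> smallS K B ->
    indep A C B -> subset A0 A -> subset B0 B -> indep A0 C B0.

Definition full_existence {L : Language} (M : Structure L) (K : Type)
  (indep : (M -> Prop) -> (M -> Prop) -> (M -> Prop) -> Prop) : Prop :=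
  forall (C B : M -> Prop) (I : Type) (a : I -> M),
    smallS K C -> closed M C -> smallS K B -> smallT K I ->
    exists a' : I -> M, conjC M C a' a /\ indep (range a') C B.

Definition stationarity {L : Language} (M : Structure L) (K : Type)
  (indep : (M -> Prop) -> (M -> Prop) -> (M -> Prop) -> Prop) : Prop :=
  forall (C : M -> Prop) (I J : Type) (a a' : I -> M) (b : J -> M),
    smallS K C -> smallT K I -> smallT K J -> closed M C ->
    closed_tuple M a -> closed_tuple M a' -> closed_tuple M b ->
    subset C (range a) -> subset C (range b) ->
    indep (range a) C (range b) -> indep (range a') C (range b) -> conjC M C a' a ->
    conjC2 M C a b a' b.

(* Full existence gives a copy a1 of a over C independent from any small set U.
   If U contains a conjugate s(b) of b over C, then by monotonicity a1 is independent
   from s(b), as is s(a) by invariance, so stationarity gives a1 s(b) ≡_C s(a) s(b) ≡_C ab.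
   Taking U to be the union of an indiscernible sequence starting with b yields a ↓^d_C b.
   A point x of acl(aC) ∩ acl(bC) lies in a ∩ b because a, b are closed and contain C;
   taking U = b ∪ s(b) for s ∈ Aut(M/C), the coordinate of a1 at x equals both x and s(x),
   so x is fixed by Aut(M/C) and hence, in the monster model, algebraic over C.
   Smallness of U needs κ·ℵ0 = κ, proved via Zorn's lemma. *)

From Stdlib Require Import Arith Lia List Classical ClassicalEpsilon
  FunctionalExtensionality PropExtensionality Cantor.
From mathcomp Require boolp classical_sets.
(* Requiring mathcomp globally changes these two settings; restore the defaults. *)
Unset Asymmetric Patterns.
Set Bullet Behavior "Strict Subproofs".
Set Implicit Arguments.

Definition inj (X Y : Type) : Prop := exists f : X -> Y, forall x y, f x = f y -> x = y.

Lemma inj_trans X Y Z : inj X Y -> inj Y Z -> inj X Z.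
Proof. intros [f Hf] [g Hg]. exists (fun x => g (f x)). auto. Qed.

Lemma zorn_preorder (T : Type) (t0 : T) (R : T -> T -> Prop) :
  (forall t, R t t) -> (forall r s t, R r s -> R s t -> R r t) ->
  (forall A : T -> Prop, (forall s t, A s -> A t -> R s t \/ R t s) ->
     exists t, forall s, A s -> R s t) ->
  exists t, forall s, R t s -> R s t.
Proof.
  intros Hrefl Htrans Hchain.
  destruct (@classical_sets.ZL_preorder T t0 (fun x y => boolp.asbool (R x y)))
    as [t Hmax].
  - intros t. rewrite boolp.asboolE. apply Hrefl.
  - intros r s t. rewrite !boolp.asboolE. apply Htrans.
  - intros A HA. destruct (Hchain A) as [t Ht].
    + intros s t' Hs Ht'. specialize (HA s t' Hs Ht'). cbv beta in HA.
      rewrite !boolp.asboolE in HA. exact HA.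
    + exists t. intros s Hs. rewrite boolp.asboolE. auto.
  - exists t. intros s Hs. specialize (Hmax s). cbv beta in Hmax.
    rewrite !boolp.asboolE in Hmax. auto.
Qed.

Definition partial_injection {X Y : Type} (R : X -> Y -> Prop) : Prop :=
  (forall x y y', R x y -> R x y' -> y = y') /\ (forall x x' y, R x y -> R x' y -> x = x').

Definition subrel {X Y : Type} (R S : X -> Y -> Prop) : Prop := forall x y, R x y -> S x y.

Section Comparability.
Context {X Y : Type}.

Lemma partial_injection_union (F : (X -> Y -> Prop) -> Prop) :
  (forall R, F R -> partial_injection R) -> (forall R S, F R -> F S -> subrel R S \/ subrel S R) ->
  partial_injection (fun x y => exists R, F R /\ R x y).
Proof.
  intros Hinj Hchain. split.
  - intros x y y' [R [FR Rxy]] [S [FS Sxy]].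
    destruct (Hchain R S FR FS) as [HRS|HSR].
    + apply (proj1 (Hinj S FS) x); auto.
    + apply (proj1 (Hinj R FR) x); auto.
  - intros x x' y [R [FR Rxy]] [S [FS Sxy]].
    destruct (Hchain R S FR FS) as [HRS|HSR].
    + apply (proj2 (Hinj S FS) x x' y); auto.
    + apply (proj2 (Hinj R FR) x x' y); auto.
Qed.

Lemma partial_injection_add (R : X -> Y -> Prop) x0 y0 :
  partial_injection R -> (forall y, ~ R x0 y) -> (forall x, ~ R x y0) ->
  partial_injection (fun x y => R x y \/ (x = x0 /\ y = y0)).
Proof.
  intros [Hfun Hinj] Hx0 Hy0. split.
  - intros x y y' [H1|[-> ->]] [H2|[E2 ->]]; try subst; eauto; exfalso; eapply Hx0; eauto.
  - intros x x' y [H1|[-> ->]] [H2|[-> E2]]; try subst; eauto; exfalso; eapply Hy0; eauto.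
Qed.

Lemma inj_of_partial_injection (R : X -> Y -> Prop) :
  partial_injection R -> (forall x, exists y, R x y) -> inj X Y.
Proof.
  intros [Hfun Hinj] Htot.
  exists (fun x => proj1_sig (constructive_indefinite_description _ (Htot x))).
  intros x x' E.
  destruct (constructive_indefinite_description _ (Htot x)) as [y Hy].
  destruct (constructive_indefinite_description _ (Htot x')) as [y' Hy'].
  simpl in E. subst. eauto.
Qed.

Lemma partial_injection_flip (R : X -> Y -> Prop) :
  partial_injection R -> partial_injection (fun y x => R x y).
Proof. intros [Hfun Hinj]. split; eauto. Qed.

End Comparability.

Lemma inj_total X Y : inj X Y \/ inj Y X.
Proof.
  set (T := {R : X -> Y -> Prop | partial_injection R}).
  assert (Hempty : partial_injection (fun (_ : X) (_ : Y) => False)) by (split; contradiction).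
  destruct (@zorn_preorder T (exist _ _ Hempty) (fun t s => subrel (proj1_sig t) (proj1_sig s)))
    as [[R HR] Hmax].
  - intros t x y; auto.
  - intros r s t Hrs Hst x y H; auto.
  - intros A HA.
    assert (Hu : partial_injection
                   (fun x y => exists R, (exists t, A t /\ proj1_sig t = R) /\ R x y)).
    { apply (@partial_injection_union X Y).
      - intros R' [[R HR] [_ <-]]. exact HR.
      - intros R' S' [t [At <-]] [s [As <-]]. auto. }
    exists (exist _ _ Hu). intros s As x y Hs. exists (proj1_sig s). eauto.
  - simpl in Hmax.
    destruct (classic (forall x, exists y, R x y)) as [Htot|Hx0].
    { left. exact (inj_of_partial_injection HR Htot). }
    destruct (classic (forall y, exists x, R x y)) as [Hsurj|Hy0].
    { right. exact (inj_of_partial_injection (partial_injection_flip HR) Hsurj). }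
    exfalso.
    apply not_all_ex_not in Hx0 as [x0 Hx0]. apply not_all_ex_not in Hy0 as [y0 Hy0].
    assert (Hext := @partial_injection_add X Y R x0 y0 HR (fun y H => Hx0 (ex_intro _ y H))
                                            (fun x H => Hy0 (ex_intro _ x H))).
    apply Hx0. exists y0. apply (Hmax (exist _ _ Hext)).
    + intros x y H. left. exact H.
    + right. auto.
Qed.

Lemma to_nat_inj p q : Cantor.to_nat p = Cantor.to_nat q -> p = q.
Proof. intros E. rewrite <- (Cantor.cancel_of_to p), <- (Cantor.cancel_of_to q). congruence. Qed.

Section NatProduct.
Variable A : Type.

Definition nat_prod_embedding (D : A -> Prop) (g : nat -> A -> A) : Prop :=
  (forall n a, D a -> D (g n a)) /\
  (forall n m a b, D a -> D b -> g n a = g m b -> n = m /\ a = b).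

Definition embedding : Type :=
  {p : (A -> Prop) * (nat -> A -> A) | nat_prod_embedding (fst p) (snd p)}.
Definition emb_dom (t : embedding) : A -> Prop := fst (proj1_sig t).
Definition emb_map (t : embedding) : nat -> A -> A := snd (proj1_sig t).
Definition emb_extends (t s : embedding) : Prop :=
  (forall a, emb_dom t a -> emb_dom s a) /\
  (forall n a, emb_dom t a -> emb_map t n a = emb_map s n a).

Lemma nat_prod_embedding_empty : nat_prod_embedding (fun _ => False) (fun _ a => a).
Proof. split; simpl; intros; contradiction. Qed.

Definition emb_empty : embedding :=
  exist _ (fun _ => False, fun _ a => a) nat_prod_embedding_empty.

Lemma emb_chain_bound (Ch : embedding -> Prop) :
  (forall s t, Ch s -> Ch t -> emb_extends s t \/ emb_extends t s) ->
  exists t, forall s, Ch s -> emb_extends s t.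
Proof.
  intros Hchain.
  set (dflt := inhabits emb_empty).
  set (owner a := epsilon dflt (fun t => Ch t /\ emb_dom t a)).
  set (D a := exists t, Ch t /\ emb_dom t a).
  set (g n a := emb_map (owner a) n a).
  assert (Howner : forall a, D a -> Ch (owner a) /\ emb_dom (owner a) a).
  { intros a Ha. exact (epsilon_spec dflt (fun t => Ch t /\ emb_dom t a) Ha). }
  assert (Hagree : forall s a n, Ch s -> emb_dom s a -> emb_map s n a = g n a).
  { intros s a n Cs Ds. destruct (Howner a) as [Co Do]; [exists s; auto|].
    unfold g. destruct (Hchain s (owner a) Cs Co) as [[_ H]|[_ H]]; auto.
    symmetry. auto. }
  assert (Hemb : nat_prod_embedding D g).
  { split.
    - intros n a Ha. destruct (Howner a Ha) as [Co Do]. exists (owner a). split; auto.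
      apply (proj1 (proj2_sig (owner a))). exact Do.
    - intros n m a b Ha Hb E.
      destruct (Howner a Ha) as [Ca Da]. destruct (Howner b Hb) as [Cb Db].
      destruct (Hchain (owner a) (owner b) Ca Cb) as [[Hsub _]|[Hsub _]].
      + rewrite <- (Hagree (owner b) a n Cb (Hsub _ Da)) in E. unfold g in E.
        exact (proj2 (proj2_sig (owner b)) n m a b (Hsub _ Da) Db E).
      + rewrite <- (Hagree (owner a) b m Ca (Hsub _ Db)) in E. unfold g in E.
        exact (proj2 (proj2_sig (owner a)) n m a b Da (Hsub _ Db) E). }
  exists (exist _ (D, g) Hemb). intros s Cs. split.
  - intros a Ha. exists s. auto.
  - intros n a Ha. apply Hagree; auto.
Qed.

(* On the fresh points, [g' n (e k) = e ⟨n, k⟩]. *)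
Lemma nat_prod_embedding_grow D g (e : nat -> A) :
  nat_prod_embedding D g -> (forall m m', e m = e m' -> m = m') -> (forall m, ~ D (e m)) ->
  exists D' g', nat_prod_embedding D' g' /\ (forall a, D a -> D' a) /\
    (forall n a, D a -> g n a = g' n a) /\ D' (e 0).
Proof.
  intros [Hstab Hinj] He Hfresh.
  set (index a := epsilon (inhabits 0) (fun m => e m = a)).
  assert (Hindex : forall m, index (e m) = m).
  { intros m. apply He. exact (epsilon_spec (inhabits 0) (fun k => e k = e m) (ex_intro _ m eq_refl)). }
  exists (fun a => D a \/ exists m, e m = a).
  exists (fun n a => match excluded_middle_informative (D a) with
             | left _ => g n a
             | right _ => e (Cantor.to_nat (n, index a)) end).
  split; [split|split; [|split]].
  - intros n a _. destruct (excluded_middle_informative (D a)); [left; auto|right; eauto].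
  - intros n m a b Ha Hb E.
    destruct (excluded_middle_informative (D a)) as [Da|Da];
    destruct (excluded_middle_informative (D b)) as [Db|Db].
    + eauto.
    + exfalso. apply (Hfresh (Cantor.to_nat (m, index b))). rewrite <- E. auto.
    + exfalso. apply (Hfresh (Cantor.to_nat (n, index a))). rewrite E. auto.
    + destruct Ha as [Ha|[k <-]]; [contradiction|]. destruct Hb as [Hb|[k' <-]]; [contradiction|].
      apply He, to_nat_inj in E. rewrite !Hindex in E. injection E. auto.
  - auto.
  - intros n a Da. destruct (excluded_middle_informative (D a)); [auto|contradiction].
  - right. eauto.
Qed.

(* Points of [D] are coded by even, points outside [D] by odd first coordinates. *)
Lemma inj_nat_prod_of_embedding D g d0 :
  nat_prod_embedding D g -> D d0 -> inj {a | ~ D a} nat -> inj (nat * A) A.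
Proof.
  intros [_ Hinj] Hd0 [h Hh].
  exists (fun p : nat * A => let (n, a) := p in
    match excluded_middle_informative (D a) with
    | left _ => g (2 * n) a
    | right H => g (2 * Cantor.to_nat (n, h (exist _ a H)) + 1) d0 end).
  intros [n a] [m b] E.
  destruct (excluded_middle_informative (D a)) as [Da|Da];
  destruct (excluded_middle_informative (D b)) as [Db|Db].
  - destruct (Hinj _ _ _ _ Da Db E) as [E1 E2]. f_equal; [lia|auto].
  - destruct (Hinj _ _ _ _ Da Hd0 E) as [E1 E2]. lia.
  - destruct (Hinj _ _ _ _ Hd0 Db E) as [E1 E2]. lia.
  - destruct (Hinj _ _ _ _ Hd0 Hd0 E) as [E1 _].
    assert (E2 : Cantor.to_nat (n, h (exist _ a Da)) = Cantor.to_nat (m, h (exist _ b Db))) by lia.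
    apply to_nat_inj in E2. injection E2. intros E3 ->. apply Hh in E3.
    injection E3. intros ->. reflexivity.
Qed.

Lemma inj_nat_prod : inj nat A -> inj (nat * A) A.
Proof.
  intros [e He].
  destruct (@zorn_preorder embedding emb_empty emb_extends)
    as [[[D g] Hemb] Hmax].
  - intros t. split; auto.
  - intros r s t [H1 H2] [H3 H4]. split; auto.
    intros n a Ha. rewrite H2 by auto. apply H4; auto.
  - exact emb_chain_bound.
  - simpl in Hemb.
    (* A maximal embedding meets every copy of [nat], so its complement is countable. *)
    assert (Hmeets : forall e' : nat -> A, (forall m m', e' m = e' m' -> m = m') ->
                     exists m, D (e' m)).
    { intros e' He'. apply NNPP. intros Hfresh.
      destruct (nat_prod_embedding_grow e' Hemb He' (fun m Dm => Hfresh (ex_intro _ m Dm)))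
        as [D' [g' [Hemb' [HD [Hg Hnew]]]]].
      destruct (Hmax (exist _ (D', g') Hemb')) as [HD' _].
      + split; [exact HD|exact Hg].
      + apply Hfresh. exists 0. exact (HD' _ Hnew). }
    destruct (Hmeets e He) as [m Hd0].
    apply (inj_nat_prod_of_embedding _ Hemb Hd0).
    destruct (inj_total {a | ~ D a} nat) as [H|[f Hf]]; [exact H|exfalso].
    destruct (Hmeets (fun m => proj1_sig (f m))) as [m' Hm'].
    + intros x y E. apply Hf. destruct (f x), (f y). simpl in E. subst.
      f_equal. apply proof_irrelevance.
    + exact (proj2_sig (f m') Hm').
Qed.

End NatProduct.

Section Smallness.
Variable K : Type.
Hypothesis small_nat : smallT K nat.

Lemma smallT_inj X Y : inj X Y -> smallT K Y -> smallT K X.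
Proof. intros HXY HY HKX. apply HY. exact (inj_trans HKX HXY). Qed.

Lemma smallT_nat_prod X : smallT K X -> smallT K (nat * X).
Proof.
  intros HX. destruct (inj_total X nat) as [[f Hf]|HnatX].
  - apply (smallT_inj (Y := nat)); [|exact small_nat].
    exists (fun p => Cantor.to_nat (fst p, f (snd p))).
    intros [n x] [m y] E. apply to_nat_inj in E. injection E. intros E1 ->.
    rewrite (Hf _ _ E1). reflexivity.
  - exact (smallT_inj (inj_nat_prod HnatX) HX).
Qed.

Lemma smallT_sum X Y : smallT K X -> smallT K Y -> smallT K (X + Y).
Proof.
  intros HX HY. destruct (inj_total X Y) as [[f Hf]|[f Hf]].
  - apply (smallT_inj (Y := nat * Y)); [|exact (smallT_nat_prod HY)].
    exists (fun p => match p with inl x => (0, f x) | inr y => (1, y) end).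
    intros [x|y] [x'|y'] E; injection E; intros; try discriminate; subst; auto.
    rewrite (Hf _ _ H). reflexivity.
  - apply (smallT_inj (Y := nat * X)); [|exact (smallT_nat_prod HX)].
    exists (fun p => match p with inl x => (0, x) | inr y => (1, f y) end).
    intros [x|y] [x'|y'] E; injection E; intros; try discriminate; subst; auto.
    rewrite (Hf _ _ H). reflexivity.
Qed.

Lemma smallT_option X : smallT K X -> smallT K (option X).
Proof.
  intros HX. apply (smallT_inj (Y := X + nat)); [|exact (smallT_sum HX small_nat)].
  exists (fun o => match o with Some x => inl x | None => inr 0 end).
  intros [x|] [y|] E; try discriminate; auto. injection E. intros ->. reflexivity.
Qed.

End Smallness.

Lemma smallS_range K X I (a : I -> X) : smallT K I -> smallS K (range a).
Proof.
  intros HI. apply (smallT_inj (Y := I)); [|exact HI].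
  exists (fun x : {x | range a x} =>
    proj1_sig (constructive_indefinite_description (fun i => a i = proj1_sig x) (proj2_sig x))).
  intros [x Hx] [y Hy] E. cbn in E.
  destruct (constructive_indefinite_description _ Hx) as [i Hi].
  destruct (constructive_indefinite_description _ Hy) as [j Hj].
  cbn in E. subst. f_equal. apply proof_irrelevance.
Qed.

Section Automorphisms.
Variable L : Language.
Variable M : Structure L.

Fixpoint tmap (s : M -> M) (t : term L M) : term L M :=
  match t with
  | tvar _ _ n => tvar L M n
  | tpar _ c => tpar L (s c)
  | tfun f args => tfun f (fun i => tmap s (args i))
  end.

Fixpoint fmap (s : M -> M) (phi : formula L M) : formula L M :=
  match phi with
  | feq t1 t2 => feq (tmap s t1) (tmap s t2)
  | frel r args => frel r (fun i => tmap s (args i))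
  | fnot psi => fnot (fmap s psi)
  | fand p q => fand (fmap s p) (fmap s q)
  | fex n psi => fex n (fmap s psi)
  end.

Lemma teval_aut s v t : automorphism M s ->
  s (teval M v t) = teval M (fun n => s (v n)) (tmap s t).
Proof.
  intros Hs. induction t as [n|c|f args IH]; simpl; auto.
  destruct Hs as [_ [_ [Hf _]]]. rewrite Hf. f_equal. apply functional_extensionality. auto.
Qed.

Lemma update_aut (s : M -> M) (v : nat -> M) n x :
  (fun k => s (update v n x k)) = update (fun k => s (v k)) n (s x).
Proof. apply functional_extensionality. intros k. unfold update. destruct (Nat.eqb k n); auto. Qed.

Lemma sat_aut s phi : automorphism M s -> forall v,
  sat M v phi <-> sat M (fun n => s (v n)) (fmap s phi).
Proof.
  intros Hs. induction phi as [t1 t2|r args|psi IH|p IHp q IHq|n psi IH]; intros v; simpl.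
  - rewrite <- !teval_aut by auto. destruct Hs as [Hinj _]. split; [congruence|auto].
  - pose proof Hs as [_ [_ [_ Hr]]]. rewrite Hr.
    replace (fun i => s (teval M v (args i)))
      with (fun i => teval M (fun n => s (v n)) (tmap s (args i))); [tauto|].
    apply functional_extensionality. intros i. rewrite teval_aut; auto.
  - rewrite IH. tauto.
  - rewrite IHp, IHq. tauto.
  - split.
    + intros [x Hx]. exists (s x). rewrite IH, update_aut in Hx. exact Hx.
    + intros [y Hy]. destruct Hs as [Hinj [Hsurj Hr]]. destruct (Hsurj y) as [x <-].
      exists x. rewrite IH, update_aut by (repeat split; auto). exact Hy.
Qed.

Lemma tparams_in_map (A : M -> Prop) s t : tparams_in A t -> tparams_in (image s A) (tmap s t).
Proof. induction t; simpl; auto. intros H. exists a. auto. Qed.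

Lemma params_in_map (A : M -> Prop) s phi : params_in A phi -> params_in (image s A) (fmap s phi).
Proof. induction phi; simpl; intuition (auto using tparams_in_map). Qed.

Lemma tparams_in_mono (A B : M -> Prop) (t : term L M) :
  subset A B -> tparams_in A t -> tparams_in B t.
Proof. intros H. induction t; simpl; auto. Qed.

Lemma params_in_mono (A B : M -> Prop) (phi : formula L M) :
  subset A B -> params_in A phi -> params_in B phi.
Proof. intros H. induction phi; simpl; intuition (eauto using tparams_in_mono). Qed.

Lemma acl_mono (A B : M -> Prop) x : subset A B -> acl M A x -> acl M B x.
Proof. intros H [phi [P S]]. exists phi. split; [eapply params_in_mono; eauto|auto]. Qed.

Lemma automorphism_inv s : automorphism M s -> exists s', automorphism M s' /\
  (forall x, s' (s x) = x) /\ (forall y, s (s' y) = y).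
Proof.
  intros Hs. pose proof Hs as [Hinj [Hsurj [Hf Hr]]].
  set (s' y := proj1_sig (constructive_indefinite_description _ (Hsurj y))).
  assert (Hss' : forall y, s (s' y) = y).
  { intros y. unfold s'. destruct (constructive_indefinite_description _ (Hsurj y)). auto. }
  assert (Hs's : forall x, s' (s x) = x) by (intros x; apply Hinj; rewrite Hss'; auto).
  exists s'. split; [|split; auto].
  split; [|split; [|split]].
  - intros x y E. rewrite <- (Hss' x), <- (Hss' y), E. auto.
  - intros y. exists (s y). auto.
  - intros f args. apply Hinj. rewrite Hss', Hf. f_equal. apply functional_extensionality. auto.
  - intros r args. rewrite (Hr r (fun i => s' (args i))).
    replace (fun i => s (s' (args i))) with args; [tauto|].
    apply functional_extensionality. auto.
Qed.

Lemma automorphism_comp s t : automorphism M s -> automorphism M t ->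
  automorphism M (fun x => s (t x)).
Proof.
  intros [Hi [Hsu [Hf Hr]]] [Ti [Tsu [Tf Tr]]]. split; [|split; [|split]].
  - auto.
  - intros y. destruct (Hsu y) as [z <-]. destruct (Tsu z) as [x <-]. eauto.
  - intros f args. rewrite Tf, Hf. auto.
  - intros r args. rewrite Tr, Hr. tauto.
Qed.

Lemma automorphism_id : automorphism M (fun x => x).
Proof.
  split; [|split; [|split]]; auto.
  - intros y. exists y. reflexivity.
  - reflexivity.
Qed.

Lemma acl_aut s A x : automorphism M s -> acl M A x -> acl M (image s A) (s x).
Proof.
  intros Hs [phi [P [S [l F]]]]. destruct (automorphism_inv Hs) as [s' [Hs' [_ Hss']]].
  exists (fmap s phi). split; [apply params_in_map; auto|split].
  - exact (proj1 (sat_aut phi Hs _) S).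
  - exists (map s l). intros y Hy. unfold sat1 in Hy. rewrite <- (Hss' y) in Hy.
    apply (sat_aut phi Hs (fun _ => s' y)), F in Hy.
    rewrite <- (Hss' y). apply in_map. exact Hy.
Qed.

Lemma closed_tuple_aut I (a : I -> M) s : automorphism M s -> closed_tuple M a ->
  closed_tuple M (fun i => s (a i)).
Proof.
  intros Hs Hc x Hx. destruct (automorphism_inv Hs) as [s' [Hs' [Hs's Hss']]].
  apply (acl_aut Hs') in Hx. eapply acl_mono in Hx.
  - destruct (Hc _ Hx) as [i Hi]. exists i. rewrite Hi. auto.
  - intros y [z [[i <-] <-]]. exists i. auto.
Qed.

Fixpoint tsubst (sg : nat -> term L M) (t : term L M) : term L M :=
  match t with
  | tvar _ _ n => sg n
  | tpar _ c => tpar L c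
  | tfun f args => tfun f (fun i => tsubst sg (args i))
  end.

Fixpoint fsubst (sg : nat -> term L M) (phi : formula L M) : formula L M :=
  match phi with
  | feq t1 t2 => feq (tsubst sg t1) (tsubst sg t2)
  | frel r args => frel r (fun i => tsubst sg (args i))
  | fnot psi => fnot (fsubst sg psi)
  | fand p q => fand (fsubst sg p) (fsubst sg q)
  | fex n psi => fex n (fsubst (update sg n (tvar L M n)) psi)
  end.

Lemma teval_subst w sg t : teval M w (tsubst sg t) = teval M (fun m => teval M w (sg m)) t.
Proof.
  induction t as [n|c|f args IH]; simpl; auto. f_equal. apply functional_extensionality. auto.
Qed.

(* [fsubst] does not rename bound variables; it is only sound for substitutions
   that introduce no variables. *)
Definition var_or_param (sg : nat -> term L M) : Prop :=
  forall m, sg m = tvar L M m \/ exists c, sg m = tpar L c.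

Lemma update_subst w sg n x : var_or_param sg ->
  (fun m => teval M (update w n x) (update sg n (tvar L M n) m)) =
  update (fun m => teval M w (sg m)) n x.
Proof.
  intros Hsg. apply functional_extensionality. intros m. unfold update.
  destruct (Nat.eqb m n) eqn:E; simpl; [rewrite Nat.eqb_refl; auto|].
  destruct (Hsg m) as [H|[c H]]; rewrite H; simpl; auto. rewrite E. auto.
Qed.

Lemma sat_subst phi : forall sg w, var_or_param sg ->
  (sat M w (fsubst sg phi) <-> sat M (fun m => teval M w (sg m)) phi).
Proof.
  induction phi as [t1 t2|r args|psi IH|p IHp q IHq|n psi IH]; intros sg w Hsg; simpl.
  - rewrite !teval_subst. tauto.
  - replace (fun i => teval M w (tsubst sg (args i)))
      with (fun i => teval M (fun m => teval M w (sg m)) (args i)); [tauto|].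
    apply functional_extensionality. intros i. rewrite teval_subst. auto.
  - rewrite IH; tauto.
  - rewrite IHp, IHq; tauto.
  - assert (Hsg' : var_or_param (update sg n (tvar L M n))).
    { intros m. unfold update. destruct (Nat.eqb m n) eqn:E; auto.
      apply Nat.eqb_eq in E. subst. auto. }
    split; intros [x Hx]; exists x.
    + rewrite IH, update_subst in Hx by auto. exact Hx.
    + rewrite IH, update_subst by auto. exact Hx.
Qed.

Lemma tparams_in_subst (P : M -> Prop) (t : term L M) sg : tparams_in (fun _ => False) t ->
  (forall m, tparams_in P (sg m)) -> tparams_in P (tsubst sg t).
Proof. intros H Hs. induction t; simpl in *; auto. contradiction. Qed.

Lemma params_in_subst (P : M -> Prop) (phi : formula L M) : forall sg,
  params_in (fun _ => False) phi -> (forall m, tparams_in P (sg m)) ->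
  params_in P (fsubst sg phi).
Proof.
  induction phi; intros sg H Hs; simpl in *; intuition (eauto using tparams_in_subst).
  apply IHphi; auto. intros m. unfold update. destruct (Nat.eqb m n); simpl; auto.
Qed.

End Automorphisms.

Arguments fsubst {L M}.
Arguments var_or_param {L M}.

Section Monster.
Variables (L : Language) (M : Structure L) (K : Type).
Hypothesis monster_M : monster M K.

Lemma monster_smallT_nat : smallT K nat.
Proof.
  destruct monster_M as [HL _]. apply (smallT_inj (Y := (Fsym L + Rsym L + nat)%type)); [|exact HL].
  exists (fun n => inr n). intros x y E. injection E. auto.
Qed.

Definition neq_formula (x : M) : formula L M := fnot (feq (tvar L M 0) (tpar L x)).

Lemma type_list_conj (C : M -> Prop) x (l : list (formula L M)) :
  (forall phi, In phi l -> (params_in C phi /\ sat1 M phi x) \/ phi = neq_formula x) ->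
  exists psi, params_in C psi /\ sat1 M psi x /\
    forall y, sat1 M psi y -> y <> x -> forall phi, In phi l -> sat1 M phi y.
Proof.
  induction l as [|phi l IH]; intros Hl.
  - exists (feq (tvar L M 0) (tvar L M 0)). simpl. unfold sat1. simpl. intuition.
  - destruct IH as [psi [Hpsi [Hx Hl']]]; [intros; apply Hl; simpl; auto|].
    destruct (Hl phi (or_introl eq_refl)) as [[Hphi Hphix]| ->].
    + exists (fand phi psi). split; [simpl; auto|split; [split; auto|]].
      intros y [Hy1 Hy2] Hyx phi0 [<- | E]; [exact Hy1|]. apply Hl'; auto.
    + exists psi. split; [auto|split; [auto|]].
      intros y Hy Hyx phi0 [<- | E]; [exact Hyx|]. apply Hl'; auto.
Qed.

Lemma smallS_add (C : M -> Prop) x : smallS K C -> smallS K (fun y => C y \/ y = x).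
Proof.
  intros HC. apply (smallT_inj (Y := option {c | C c})).
  2: exact (smallT_option monster_smallT_nat HC).
  exists (fun y => match excluded_middle_informative (C (proj1_sig y)) with
                   | left H => Some (exist _ _ H) | right _ => None end).
  intros [y Hy] [z Hz] E. simpl in E.
  destruct (excluded_middle_informative (C y)) as [Cy|Cy];
  destruct (excluded_middle_informative (C z)) as [Cz|Cz]; try discriminate.
  - injection E. intros ->. f_equal. apply proof_irrelevance.
  - assert (y = z) as -> by (destruct Hy, Hz; try contradiction; congruence).
    f_equal. apply proof_irrelevance.
Qed.

(* Saturation realises the type of [x] over [C] together with [y <> x]. *)
Lemma exists_other_realization (C : M -> Prop) x : smallS K C -> ~ acl M C x ->
  exists x', x' <> x /\ forall psi, params_in C psi -> sat1 M psi x -> sat1 M psi x'.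
Proof.
  intros HC Hn. destruct monster_M as [_ [Hsat _]].
  set (p := fun phi => (params_in C phi /\ sat1 M phi x) \/ phi = neq_formula x).
  destruct (Hsat (fun y => C y \/ y = x) p (smallS_add (x := x) HC)) as [x' Hx'].
  - intros phi [[H1 _]| ->].
    + eapply params_in_mono; [|exact H1]. intros y Hy. left. exact Hy.
    + simpl. auto.
  - intros l Hl. destruct (type_list_conj C l Hl) as [psi [Hpsi [Hx Hl']]].
    destruct (classic (exists y, sat1 M psi y /\ y <> x)) as [[y [Hy1 Hy2]]|Hno].
    + exists y. apply Hl'; auto.
    + exfalso. apply Hn. exists psi. split; [auto|split; [auto|]].
      exists (x :: nil). intros y Hy. left. apply NNPP. intros Hne. apply Hno. eauto.
  - exists x'. split.
    + exact (Hx' (neq_formula x) (or_intror eq_refl)).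
    + intros psi Hpsi Hx. apply Hx'. left. auto.
Qed.

(* Strong homogeneity applied to the tuples [(x, C)] and [(x', C)]. *)
Lemma exists_aut_of_same_type (C : M -> Prop) x x' : smallS K C ->
  (forall psi, params_in C psi -> sat1 M psi x -> sat1 M psi x') ->
  exists s, automorphism M s /\ (forall c, C c -> s c = c) /\ s x = x'.
Proof.
  intros HC Htp. destruct monster_M as [_ [_ Hhom]].
  assert (Hiff : forall psi, params_in C psi -> (sat1 M psi x <-> sat1 M psi x')).
  { intros psi Hpsi. split; [auto|]. intros Hx'. apply NNPP. intros Hx.
    exact (Htp (fnot psi) Hpsi Hx Hx'). }
  set (a := fun o : option {c | C c} => match o with Some c => proj1_sig c | None => x end).
  set (a' := fun o : option {c | C c} => match o with Some c => proj1_sig c | None => x' end).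
  destruct (Hhom _ a a' (smallT_option monster_smallT_nat HC)) as [s [Hs Hsa]].
  - intros phi rho Hphi.
    set (sg := fun m => match rho m with Some c => tpar L (proj1_sig c) | None => tvar L M m end).
    assert (Hsg : var_or_param sg) by (intros m; unfold sg; destruct (rho m); eauto).
    assert (Hpsi : params_in C (fsubst sg phi)).
    { apply params_in_subst; auto. intros m. unfold sg. destruct (rho m) as [[c Hc]|]; simpl; auto. }
    assert (Ea : forall z, (fun m => teval M (fun _ => z) (sg m)) =
                           (fun m => match rho m with Some c => proj1_sig c | None => z end)).
    { intros z. apply functional_extensionality. intros m. unfold sg. destruct (rho m); auto. }
    unfold a, a'. rewrite <- Ea, <- Ea, <- !sat_subst by auto. apply Hiff. exact Hpsi.
  - exists s. split; [exact Hs|split].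
    + intros c Hc. exact (Hsa (Some (exist _ c Hc))).
    + exact (Hsa None).
Qed.

Lemma acl_of_fixed (C : M -> Prop) x : smallS K C ->
  (forall s, automorphism M s -> (forall c, C c -> s c = c) -> s x = x) -> acl M C x.
Proof.
  intros HC Hfix. apply NNPP. intros Hn.
  destruct (exists_other_realization HC Hn) as [x' [Hne Htp]].
  destruct (exists_aut_of_same_type x x' HC Htp) as [s [Hs [Hsf <-]]].
  apply Hne. apply Hfix; auto.
Qed.

End Monster.

Section Conjugacy.
Variables (L : Language) (M : Structure L).

Lemma pred_ext (P Q : M -> Prop) : (forall x, P x <-> Q x) -> P = Q.
Proof.
  intros H. apply functional_extensionality. intros x. apply propositional_extensionality. auto.
Qed.

Lemma image_range I (a : I -> M) (s : M -> M) : image s (range a) = range (fun i => s (a i)).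
Proof.
  apply pred_ext. intros y. split.
  - intros [x [[i <-] <-]]. exists i. reflexivity.
  - intros [i <-]. exists (a i). split; [exists i|]; reflexivity.
Qed.

Lemma image_fixed (C : M -> Prop) (s : M -> M) : (forall c, C c -> s c = c) -> image s C = C.
Proof.
  intros H. apply pred_ext. intros y. split.
  - intros [x [Cx <-]]. rewrite H by exact Cx. exact Cx.
  - intros Cy. exists y. auto.
Qed.

Lemma subset_range_aut (C : M -> Prop) I (a : I -> M) (s : M -> M) :
  (forall c, C c -> s c = c) -> subset C (range a) -> subset C (range (fun i => s (a i))).
Proof. intros Hs HC c Hc. destruct (HC c Hc) as [i Hi]. exists i. rewrite Hi. auto. Qed.

Lemma closed_tuple_conj (C : M -> Prop) I (a a' : I -> M) :
  conjC M C a' a -> closed_tuple M a -> closed_tuple M a'.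
Proof.
  intros [t [Ht [_ Hta]]] Ha. destruct (automorphism_inv Ht) as [t' [Ht' [Ht't _]]].
  replace a' with (fun i => t' (a i)).
  - exact (closed_tuple_aut Ht' Ha).
  - apply functional_extensionality. intros i. rewrite <- Hta. auto.
Qed.

Lemma conjC2_of_aut (C : M -> Prop) I J (a : I -> M) (b : J -> M) (s : M -> M) :
  automorphism M s -> (forall c, C c -> s c = c) ->
  conjC2 M C a b (fun i => s (a i)) (fun j => s (b j)).
Proof. intros Hs Hsf. exists s. auto. Qed.

Lemma conjC2_sym (C : M -> Prop) I J (a a' : I -> M) (b b' : J -> M) :
  conjC2 M C a b a' b' -> conjC2 M C a' b' a b.
Proof.
  intros [s [Hs [Hsf [Hsa Hsb]]]]. destruct (automorphism_inv Hs) as [s' [Hs' [Hs's _]]].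
  exists s'. split; [exact Hs'|split; [|split]].
  - intros c Hc. rewrite <- (Hsf c Hc) at 1. auto.
  - intros i. rewrite <- Hsa. auto.
  - intros j. rewrite <- Hsb. auto.
Qed.

Lemma conjC2_trans (C : M -> Prop) I J (a a' a'' : I -> M) (b b' b'' : J -> M) :
  conjC2 M C a b a' b' -> conjC2 M C a' b' a'' b'' -> conjC2 M C a b a'' b''.
Proof.
  intros [s [Hs [Hsf [Hsa Hsb]]]] [t [Ht [Htf [Hta Htb]]]].
  exists (fun x => t (s x)). split; [exact (automorphism_comp Ht Hs)|split; [|split]].
  - intros c Hc. rewrite Hsf, Htf; auto.
  - intros i. rewrite Hsa. auto.
  - intros j. rewrite Hsb. auto.
Qed.

Lemma indiscernible_conj (C : M -> Prop) J (bs : nat -> J -> M) i :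
  indiscernible M C bs -> conjC M C (bs 0) (bs i).
Proof.
  intros Hind.
  destruct (Hind 1 (fun k => k) (fun k => i + k)) as [s [Hs [Hsf Hsb]]]; [intros; lia..|].
  exists s. split; [exact Hs|split; [exact Hsf|]].
  intros j. specialize (Hsb (exist _ 0 (Nat.lt_0_succ 0), j)). simpl in Hsb.
  rewrite Nat.add_0_r in Hsb. exact Hsb.
Qed.

End Conjugacy.

Section Independence.
Variables (L : Language) (M : Structure L) (K : Type).
Variable indep : (M -> Prop) -> (M -> Prop) -> (M -> Prop) -> Prop.
Hypotheses (monster_M : monster M K) (indep_inv : invariance M K indep)
  (indep_mono : monotonicity M K indep) (indep_ex : full_existence M K indep)
  (indep_stat : stationarity M K indep).
Variables (I J : Type) (a : I -> M) (b : J -> M) (C : M -> Prop).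
Hypotheses (small_I : smallT K I) (small_J : smallT K J) (small_C : smallS K C)
  (closed_a : closed_tuple M a) (closed_b : closed_tuple M b) (closed_C : closed M C)
  (C_sub_a : subset C (range a)) (C_sub_b : subset C (range b))
  (indep_ab : indep (range a) C (range b)).

Lemma indep_aut (s : M -> M) : automorphism M s -> (forall c, C c -> s c = c) ->
  indep (range (fun i => s (a i))) C (range (fun j => s (b j))).
Proof.
  intros Hs Hsf. rewrite <- !image_range, <- (image_fixed M C s Hsf).
  apply indep_inv; auto using smallS_range.
Qed.

Lemma indep_copy_conj (a1 : I -> M) (U : M -> Prop) (s : M -> M) :
  conjC M C a1 a -> smallS K U -> indep (range a1) C U ->
  automorphism M s -> (forall c, C c -> s c = c) -> subset (range (fun j => s (b j))) U ->
  conjC2 M C (fun i => s (a i)) (fun j => s (b j)) a1 (fun j => s (b j)).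
Proof.
  intros Ha1 HU Hind1 Hs Hsf HsbU.
  apply indep_stat; auto using closed_tuple_aut, subset_range_aut, indep_aut.
  - exact (closed_tuple_conj Ha1 closed_a).
  - apply (indep_mono (A := range a1) (B := U)); auto using smallS_range.
    intros x Hx. exact Hx.
  - destruct Ha1 as [t [Ht [Htf Hta]]]. exists (fun x => s (t x)).
    split; [exact (automorphism_comp Hs Ht)|split].
    + intros c Hc. rewrite Htf, Hsf; auto.
    + intros i. rewrite Hta. reflexivity.
Qed.

Lemma dindep_of_indep : dindep M C a b.
Proof.
  intros bs Hind Hb0.
  set (U := range (fun p : nat * J => bs (fst p) (snd p))).
  assert (HU : smallS K U).
  { apply smallS_range, smallT_nat_prod; [exact (monster_smallT_nat monster_M)|exact small_J]. }
  destruct (indep_ex (B := U) a small_C closed_C HU small_I) as [a1 [Ha1 Hind1]].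
  exists a1. intros i.
  destruct (indiscernible_conj i Hind) as [s [Hs [Hsf Hsb]]].
  assert (Hsbi : (fun j => s (b j)) = bs i).
  { apply functional_extensionality. intros j. rewrite <- Hb0. apply Hsb. }
  assert (Hcopy := indep_copy_conj Ha1 HU Hind1 Hs Hsf).
  rewrite Hsbi in Hcopy.
  apply conjC2_trans with (fun k => s (a k)) (bs i).
  - apply conjC2_sym, Hcopy. intros x [j <-]. exists (i, j). reflexivity.
  - rewrite <- Hsbi. apply conjC2_sym, conjC2_of_aut; assumption.
Qed.

Lemma common_point_fixed (s : M -> M) i0 j0 : a i0 = b j0 ->
  automorphism M s -> (forall c, C c -> s c = c) -> s (a i0) = a i0.
Proof.
  intros Eab Hs Hsf.
  set (U := range (fun p : J + J => match p with inl j => b j | inr j => s (b j) end)).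
  assert (HU : smallS K U).
  { apply smallS_range, smallT_sum; [exact (monster_smallT_nat monster_M)|exact small_J..]. }
  destruct (indep_ex (B := U) a small_C closed_C HU small_I) as [a1 [Ha1 Hind1]].
  destruct (indep_copy_conj Ha1 HU Hind1 (@automorphism_id L M) (fun c _ => eq_refl))
    as [t [_ [_ [Hta Htb]]]].
  { intros y [j <-]. exists (inl j). reflexivity. }
  destruct (indep_copy_conj Ha1 HU Hind1 Hs Hsf) as [t' [_ [_ [Hta' Htb']]]].
  { intros y [j <-]. exists (inr j). reflexivity. }
  simpl in *.
  assert (E1 : a1 i0 = a i0) by (rewrite <- Hta, Eab, Htb; reflexivity).
  assert (E2 : a1 i0 = s (a i0)) by (rewrite <- Hta', Eab, Htb'; reflexivity).
  congruence.
Qed.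

Lemma aindep_of_indep : aindep M (range a) C (range b).
Proof.
  intros x. split.
  - intros [Hxa Hxb].
    assert (Ha : range a x).
    { apply closed_a. eapply acl_mono; [|exact Hxa]. intros y [Hy|Hy]; auto. }
    assert (Hb : range b x).
    { apply closed_b. eapply acl_mono; [|exact Hxb]. intros y [Hy|Hy]; auto. }
    destruct Ha as [i0 <-]. destruct Hb as [j0 Eb].
    apply (acl_of_fixed monster_M small_C). intros s Hs Hsf.
    exact (common_point_fixed (eq_sym Eb) Hs Hsf).
  - intros Hx. split; eapply acl_mono; try exact Hx; intros y Hy; right; exact Hy.
Qed.

End Independence.

Theorem lemma7p15 (L : Language) (M : Structure L) (K : Type)
  (indep : (M -> Prop) -> (M -> Prop) -> (M -> Prop) -> Prop) :
  monster M K ->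
  invariance M K indep -> monotonicity M K indep ->
  full_existence M K indep -> stationarity M K indep ->
  forall (I J : Type) (a : I -> M) (b : J -> M) (C : M -> Prop),
    smallT K I -> smallT K J -> smallS K C ->
    closed_tuple M a -> closed_tuple M b -> closed M C ->
    subset C (range a) -> subset C (range b) ->
    indep (range a) C (range b) ->
    dindep M C a b /\ aindep M (range a) C (range b).
Proof.
  intros. split; [eapply dindep_of_indep | eapply aindep_of_indep]; eassumption.
Qed.
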